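(* Let $g:\mathbb{R}^d\to\mathbb{R}$ be convex and twice differentiable, minimized at $x^*$ with $\|x^*\|\le R$, $g^*=g(x^* )$, and $\epsilon>0$. Let $\omega:\mathbb{R}_+\to\mathbb{R}_+$ be continuously differentiable with $0<\omega'(s)\le\gamma\,\omega(s)/s$ for some $\gamma\ge1$ and all $s>0$. Let $\alpha\in[0,1)$, $\mu=\frac{8}{\sqrt{1-\alpha}}$, $c\ge1$ with $64(\alpha+\frac1c)\gamma^2\le1$, and suppose $\delta\le\min\{\frac{\epsilon}{9\mu Rc((1+\alpha)c+1)},\ 8\mu R\,\omega(8\mu R)\}$. Then for any $x^{(1)},x^{(2)}\in\mathbb{R}^d$ with $\|x^{(1)}-x^*\|,\|x^{(2)}-x^*\|\le\mu R$ and any $A$ with $\frac{1}{2\omega(2\mu R)}\le A\le\frac{R^2}{\epsilon}$, there is an algorithm that, after at most $6+\log_2\big[\big(\frac{160\mu Rc}{\delta}+\frac{9R^2}{\epsilon}\big)\omega(8c\mu R)\big]$ calls to an $(\alpha,\delta)$-approximate $\omega$-proximal step oracle for $g$, returns $y\in\mathbb{R}^d$ and $\lambda>0$ such that, writing $a=\frac{\lambda+\sqrt{\lambda^2+4\lambda A}}{2}$ and $\tilde x=\frac{a}{A+a}x^{(1)}+\frac{A}{A+a}x^{(2)}$, either (i) $g(y)\le g^*+\epsilon$ and $\omega(\|y-\tilde x\|)\|y-\tilde x\|\le c\delta$; or (ii) $\frac12\le\lambda\,\omega(\|y-\tilde x\|)\le1$, $\omega(\|y-\tilde x\|)\|y-\tilde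 x\|>c\delta$, and $\|\nabla g(y)+\omega(\|y-\tilde x\|)(y-\tilde x)\|\le\alpha\,\omega(\|y-\tilde x\|)\|y-\tilde x\|+\delta$.
   Context: Let $\omega:\mathbb{R}_+\to\mathbb{R}_+$ be non-decreasing, $\delta\ge0$, $\alpha\in[0,1)$. An $(\alpha,\delta)$-approximate $\omega$-proximal step oracle for $g$ is a procedure that, queried at any $x\in\mathbb{R}^d$, returns some $y$ with $\|\nabla g(y)+\omega(\|y-x\|)(y-x)\|\le\alpha\,\omega(\|y-x\|)\|y-x\|+\delta$ (the returned $y$ may be any such point, possibly different on repeated queries). *)

From Stdlib Require Import Reals.
From mathcomp Require Import ssreflect ssrbool eqtype ssrnat fintype bigop.
Set Implicit Arguments.
Unset Strict Implicit.
Local Open Scope R_scope.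

Definition vec (d : nat) := 'I_d -> R.

Definition vadd d (u v : vec d) : vec d := fun i => u i + v i.
Definition vsub d (u v : vec d) : vec d := fun i => u i - v i.
Definition vscale d (a : R) (u : vec d) : vec d := fun i => a * u i.
Definition dot d (u v : vec d) : R := \big[Rplus/0]_(i < d) (u i * v i).
Definition vnorm d (u : vec d) : R := sqrt (dot u u).

Definition has_gradient d (f : vec d -> R) (x G : vec d) : Prop :=
  forall e, 0 < e -> exists del, 0 < del /\
    forall h : vec d, vnorm h < del ->
      Rabs (f (vadd x h) - f x - dot G h) <= e * vnorm h.

Definition twice_diff_with_grad d (g : vec d -> R) (grad : vec d -> vec d) : Prop :=
  (forall x, has_gradient g x (grad x)) /\
  (forall (i : 'I_d) x, exists H : vec d, has_gradient (fun z => grad z i) x H).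

Definition convex_fun d (g : vec d -> R) : Prop :=
  forall (x y : vec d) (t : R), 0 <= t <= 1 ->
    g (vadd (vscale t x) (vscale (1 - t) y)) <= t * g x + (1 - t) * g y.

Definition prox_oracle_ok d (grad : vec d -> vec d) (om : R -> R)
    (alpha delta : R) (x y : vec d) : Prop :=
  let r := vnorm (vsub y x) in
  vnorm (vadd (grad y) (vscale (om r) (vsub y x))) <= alpha * om r * r + delta.

(* Deterministic oracle algorithms: decision trees that either return an
   output (y, lambda) or query the oracle at a point x and continue with a
   function of the answer. Such an algorithm may depend only on what is
   passed to it, not on g. *)
Inductive oalg (d : nat) : Type :=
| ORet : vec d -> R -> oalg d
| OQuery : vec d -> (vec d -> oalg d) -> oalg d.

(* [safe ok post n a]: against every oracle whose answers satisfy [ok]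
   (answers may be chosen adversarially and adaptively), algorithm [a]
   makes at most [n] oracle calls and returns an output satisfying [post]. *)
Fixpoint safe d (ok : vec d -> vec d -> Prop) (post : vec d -> R -> Prop)
    (n : nat) (a : oalg d) {struct a} : Prop :=
  match a with
  | ORet y lam => post y lam
  | OQuery x k =>
      match n with
      | O => False
      | S m => forall y, ok x y -> safe ok post m (k y)
      end
  end.

Definition log2 (x : R) : R := ln x / ln 2.

From Stdlib Require Import Reals Lra Psatz ZArith FunctionalExtensionality.
From HB Require Import structures.
From mathcomp Require Import ssreflect ssrbool eqtype ssrnat fintype bigop.
Set Implicit Arguments.
Unset Strict Implicit.
Local Open Scope R_scope.

(* Writing lam = A w^2 / (1 - w), the coupled point of the accelerated scheme
   is the convex combination x(w) = w x1 + (1 - w) x2, so the search is over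
   w in (0, 1).  For an oracle answer y at x(w) with step r = |y - x(w)|, put
   phi(w) = lam om(r).  The algorithm accepts y when the step is negligible
   (om(r) r <= c delta; then y is eps-optimal) or when phi(w) is in [1/2, 1];
   otherwise it bisects in w, increasing w when phi < 1/2, decreasing it when
   phi > 1.  The analysis rests on three facts about convex g:
   - tangent planes and monotone gradients give a localization lemma
     (prox_point_localized) and a two-point inequality (prox_two_point);
   - with the growth bound s om'(s) <= gam om(s), the latter shows that the
     weights om(r) of two answers at nearby queries cannot jump by a factor
     8/5 (prox_weights_stable), so phi cannot jump from below 1/2 to above 1
     between parameters closer than 1/resolution;
   - at the two ends of the schedule phi <= 1 and phi > 1/2 respectively.
   A generic oracle bisection (search_safe) turns these into correctness of
   the algorithm within N + 2 calls when 2^N >= resolution, and a logarithmic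
   count bounds N + 2 by the quantity of the theorem. *)

Lemma Rplus_0_l_law (x : R) : Rplus 0 x = x. Proof. exact: Rplus_0_l. Qed.
Lemma Rplus_assoc_law : ssrfun.associative Rplus.
Proof. by move=> x y z; rewrite Rplus_assoc. Qed.
HB.instance Definition _ :=
  Monoid.isComLaw.Build R 0 Rplus Rplus_assoc_law Rplus_comm Rplus_0_l_law.

Section Euclidean.
Variable d : nat.
Implicit Types (u v w : vec d) (a s : R).

Lemma vec_ext u v : (forall i, u i = v i) -> u = v.
Proof. exact: functional_extensionality. Qed.

Lemma dot_sym u v : dot u v = dot v u.
Proof. by apply: eq_bigr => i _; rewrite Rmult_comm. Qed.

Lemma dot_addl u v w : dot (vadd u v) w = dot u w + dot v w.
Proof. by rewrite /dot -big_split; apply: eq_bigr => i _; rewrite /vadd Rmult_plus_distr_r. Qed.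

Lemma dot_scalel a u w : dot (vscale a u) w = a * dot u w.
Proof.
rewrite /dot; apply: (big_ind2 (fun x y => x = a * y)); first by rewrite Rmult_0_r.
  by move=> x1 x2 y1 y2 -> ->; rewrite Rmult_plus_distr_l.
by move=> i _; rewrite /vscale Rmult_assoc.
Qed.

Lemma vsub_addN u v : vsub u v = vadd u (vscale (-1) v).
Proof. by apply: vec_ext => i; rewrite /vsub /vadd /vscale; ring. Qed.

Lemma dot_subl u v w : dot (vsub u v) w = dot u w - dot v w.
Proof. rewrite vsub_addN dot_addl dot_scalel; ring. Qed.

Lemma dot_addr u v w : dot w (vadd u v) = dot w u + dot w v.
Proof. by rewrite dot_sym dot_addl !(dot_sym w). Qed.
Lemma dot_subr u v w : dot w (vsub u v) = dot w u - dot w v.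
Proof. by rewrite dot_sym dot_subl !(dot_sym w). Qed.
Lemma dot_scaler a u w : dot w (vscale a u) = a * dot w u.
Proof. by rewrite dot_sym dot_scalel (dot_sym w). Qed.

Lemma dot_self_ge0 u : 0 <= dot u u.
Proof.
rewrite /dot; apply: (big_ind (fun x => 0 <= x)) => [|x y|i _]; [lra | lra | nra].
Qed.

Lemma vnorm_ge0 u : 0 <= vnorm u.
Proof. exact: sqrt_pos. Qed.

Lemma vnorm_sq u : vnorm u * vnorm u = dot u u.
Proof. by rewrite /vnorm sqrt_sqrt //; apply: dot_self_ge0. Qed.

(* Expansion of 0 <= |s u - v|^2. *)
Lemma dot_quadratic u v s : 2 * s * dot u v <= s * s * dot u u + dot v v.
Proof.
have := dot_self_ge0 (vsub (vscale s u) v).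
rewrite !dot_subl !dot_subr !dot_scalel !dot_scaler (dot_sym v u); nra.
Qed.

Lemma dot_le0_of_vnorm0 u v : vnorm u = 0 -> dot u v <= 0.
Proof.
move=> u0; apply: Rnot_lt_le => uv_pos.
have := dot_quadratic u v ((dot v v + 1) / (2 * dot u v)).
rewrite -(vnorm_sq u) u0.
have -> : 2 * ((dot v v + 1) / (2 * dot u v)) * dot u v = dot v v + 1 by field; lra.
lra.
Qed.

Lemma cauchy_schwarz u v : dot u v <= vnorm u * vnorm v.
Proof.
have [nu nv] := (vnorm_ge0 u, vnorm_ge0 v).
case: (Req_dec (vnorm u) 0) => [u0|u0].
  by rewrite u0 Rmult_0_l; apply: dot_le0_of_vnorm0.
case: (Req_dec (vnorm v) 0) => [v0|v0].
  by rewrite v0 Rmult_0_r dot_sym; apply: dot_le0_of_vnorm0.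
have := dot_quadratic u v (vnorm v / vnorm u).
rewrite -!vnorm_sq.
have -> : vnorm v / vnorm u * (vnorm v / vnorm u) * (vnorm u * vnorm u)
          = vnorm v * vnorm v by field.
move=> H; apply: (Rmult_le_reg_l (2 * (vnorm v / vnorm u))).
  by apply: Rmult_lt_0_compat; [lra | apply: Rdiv_lt_0_compat; lra].
have -> : 2 * (vnorm v / vnorm u) * (vnorm u * vnorm v) = 2 * (vnorm v * vnorm v)
  by field.
lra.
Qed.

Lemma vnorm_scale a u : vnorm (vscale a u) = Rabs a * vnorm u.
Proof.
rewrite /vnorm dot_scalel dot_scaler -Rmult_assoc sqrt_mult_alt; last by nra.
by rewrite -(sqrt_Rsqr_abs a).
Qed.

Lemma cauchy_schwarz_lower u v : - (vnorm u * vnorm v) <= dot u v.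
Proof.
have := cauchy_schwarz (vscale (-1) u) v.
rewrite dot_scalel vnorm_scale Rabs_Ropp Rabs_R1; lra.
Qed.

Lemma vnorm_triangle u v : vnorm (vadd u v) <= vnorm u + vnorm v.
Proof.
apply: Rsqr_incr_0_var; last by have := vnorm_ge0 u; have := vnorm_ge0 v; lra.
rewrite /Rsqr vnorm_sq !dot_addl !dot_addr (dot_sym v u).
have := cauchy_schwarz u v; have := vnorm_sq u; have := vnorm_sq v; nra.
Qed.

Lemma vnorm_sub_le u v : vnorm (vsub u v) <= vnorm u + vnorm v.
Proof.
rewrite vsub_addN; apply: Rle_trans (vnorm_triangle _ _) _.
by rewrite vnorm_scale Rabs_Ropp Rabs_R1; lra.
Qed.

Lemma vnorm_sub_sym u v : vnorm (vsub u v) = vnorm (vsub v u).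
Proof.
have -> : vsub u v = vscale (-1) (vsub v u)
  by apply: vec_ext => i; rewrite /vsub /vscale; ring.
by rewrite vnorm_scale Rabs_Ropp Rabs_R1 Rmult_1_l.
Qed.

End Euclidean.

Lemma le_of_forall_eps (a b N : R) :
  0 <= N -> (forall e, 0 < e -> a <= b + e * N) -> a <= b.
Proof.
move=> N0 H; apply: Rnot_lt_le => ba.
have e0 : 0 < (a - b) / (2 * (N + 1)) by apply: Rdiv_lt_0_compat; lra.
have := H _ e0.
have : (a - b) / (2 * (N + 1)) * N < a - b.
  apply: (Rmult_lt_reg_r (2 * (N + 1))); first lra.
  have -> : (a - b) / (2 * (N + 1)) * N * (2 * (N + 1)) = (a - b) * N by field; lra.
  nra.
lra.
Qed.

Section Convexity.
Variables (d : nat) (g : vec d -> R).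
Hypothesis g_convex : convex_fun g.

(* First-order characterization: a convex function lies above its tangent
   planes.  Convexity along the segment from y towards z, divided by the step,
   is compared with the Frechet expansion at y. *)
Lemma convex_tangent_le (G y z : vec d) :
  has_gradient g y G -> g y + dot G (vsub z y) <= g z.
Proof.
move=> gradG; set u := vsub z y.
suff : dot G u <= g z - g y by lra.
apply: (le_of_forall_eps (vnorm_ge0 u)) => e e0.
have [del [del0 expand]] := gradG e e0.
set t := Rmin 1 (del / (2 * (vnorm u + 1))).
have nu := vnorm_ge0 u.
have t1 : t <= 1 by apply: Rmin_l.
have t_del : t <= del / (2 * (vnorm u + 1)) by apply: Rmin_r.
have t0 : 0 < t by apply: Rmin_pos; [lra | apply: Rdiv_lt_0_compat; lra].
have norm_tu : vnorm (vscale t u) = t * vnorm u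
  by rewrite vnorm_scale Rabs_right; lra.
have small : vnorm (vscale t u) < del.
  rewrite norm_tu; have : t * (2 * (vnorm u + 1)) <= del.
    have -> : del = del / (2 * (vnorm u + 1)) * (2 * (vnorm u + 1)) by field; lra.
    by apply: Rmult_le_compat_r; lra.
  nra.
have := expand _ small; rewrite norm_tu dot_scaler => bound.
have lower : - (e * (t * vnorm u)) <= g (vadd y (vscale t u)) - g y - t * dot G u
  by move: bound; split_Rabs; lra.
have segment : vadd (vscale t z) (vscale (1 - t) y) = vadd y (vscale t u)
  by apply: vec_ext => i; rewrite /u /vadd /vscale /vsub; ring.
have := g_convex z y (conj (Rlt_le _ _ t0) t1); rewrite segment => chord.
apply: (Rmult_le_reg_l t) => //; nra.
Qed.

Lemma convex_grad_monotone (G1 G2 y1 y2 : vec d) :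
  has_gradient g y1 G1 -> has_gradient g y2 G2 ->
  0 <= dot (vsub G1 G2) (vsub y1 y2).
Proof.
move=> grad1 grad2.
have := convex_tangent_le y2 grad1; have := convex_tangent_le y1 grad2.
rewrite dot_subl.
have -> : vsub y2 y1 = vscale (-1) (vsub y1 y2)
  by apply: vec_ext => i; rewrite /vsub /vscale; ring.
rewrite dot_scaler; lra.
Qed.

End Convexity.

Section ProximalPoints.
Variables (d : nat) (g : vec d -> R) (grad : vec d -> vec d).
Hypothesis g_convex : convex_fun g.
Hypothesis g_grad : forall z, has_gradient g z (grad z).

(* How far y is from being the exact proximal point of x with weight rho:
   an exact proximal point satisfies grad y + rho (y - x) = 0. *)
Definition prox_residual (rho : R) (x y : vec d) : vec d :=
  vadd (grad y) (vscale rho (vsub y x)).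

(* This is the monotonicity of the gradient at y1, y2, expanded. *)
Lemma prox_two_point (y1 y2 p1 p2 : vec d) (rho1 rho2 : R) :
  0 <= rho1 -> 0 <= rho2 ->
  let r1 := vnorm (vsub y1 p1) in let r2 := vnorm (vsub y2 p2) in
  let E := vnorm (vsub p1 p2) in
  (rho1 * r1 - rho2 * r2) * (r1 - r2)
  <= (rho1 * r1 + rho2 * r2) * E
     + (vnorm (prox_residual rho1 p1 y1) + vnorm (prox_residual rho2 p2 y2))
       * (r1 + r2 + E).
Proof.
move=> rho1_0 rho2_0 /=.
set u1 := vsub y1 p1; set u2 := vsub y2 p2; set e := vsub p1 p2.
set r1 := vnorm u1; set r2 := vnorm u2; set E := vnorm e.
set v1 := prox_residual rho1 p1 y1; set v2 := prox_residual rho2 p2 y2.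
set W := vsub (vscale rho1 u1) (vscale rho2 u2).
have mono := convex_grad_monotone g_convex (g_grad y1) (g_grad y2).
have grad_diff : vsub (grad y1) (grad y2) = vsub (vsub v1 v2) W
  by apply: vec_ext => i; rewrite /v1 /v2 /W /u1 /u2 /prox_residual /vsub /vadd /vscale; ring.
have point_diff : vsub y1 y2 = vadd (vsub u1 u2) e
  by apply: vec_ext => i; rewrite /u1 /u2 /e /vsub /vadd; ring.
rewrite grad_diff point_diff dot_subl (dot_addr (vsub u1 u2) e W) in mono.
have r1_0 : 0 <= r1 := vnorm_ge0 u1.
have r2_0 : 0 <= r2 := vnorm_ge0 u2.
have E_0 : 0 <= E := vnorm_ge0 e.
have steps : (rho1 * r1 - rho2 * r2) * (r1 - r2) <= dot W (vsub u1 u2).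
  rewrite /W dot_subl !dot_scalel (dot_subr u1 u2 u1) (dot_subr u1 u2 u2) (dot_sym u2 u1).
  have := cauchy_schwarz u1 u2; have := vnorm_sq u1; have := vnorm_sq u2.
  rewrite -/r1 -/r2; nra.
have cross : - ((rho1 * r1 + rho2 * r2) * E) <= dot W e.
  apply: Rle_trans (cauchy_schwarz_lower W e); apply: Ropp_le_contravar.
  apply: Rmult_le_compat_r => //; apply: Rle_trans (vnorm_sub_le _ _) _.
  by rewrite !vnorm_scale !Rabs_right -/r1 -/r2; lra.
have resid : dot (vsub v1 v2) (vadd (vsub u1 u2) e)
             <= (vnorm v1 + vnorm v2) * (r1 + r2 + E).
  apply: Rle_trans (cauchy_schwarz _ _) _.
  apply: Rmult_le_compat; try exact: vnorm_ge0; first exact: vnorm_sub_le.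
  apply: Rle_trans (vnorm_triangle _ _) _; have := vnorm_sub_le u1 u2; rewrite -/r1 -/r2 -/E; lra.
lra.
Qed.

(* This follows from
   the tangent-plane inequality at y evaluated at xs. *)
Lemma prox_point_localized (xs x y : vec d) (rho kappa : R) :
  (forall z, g xs <= g z) -> 0 <= kappa <= 1 / 3 -> 0 < rho * vnorm (vsub y x) ->
  vnorm (prox_residual rho x y) <= kappa * rho * vnorm (vsub y x) ->
  vnorm (vsub y x) <= 2 * vnorm (vsub x xs).
Proof.
move=> xs_min kappa_bd step_pos resid.
set u := vsub y x in step_pos resid *; set e := vsub x xs.
set v := prox_residual rho x y in resid.
have tangent := convex_tangent_le g_convex xs (g_grad y).
have back : vsub xs y = vscale (-1) (vadd u e)
  by apply: vec_ext => i; rewrite /u /e /vsub /vadd /vscale; ring.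
have grad_y : grad y = vsub v (vscale rho u)
  by apply: vec_ext => i; rewrite /v /u /prox_residual /vsub /vadd /vscale; ring.
rewrite back grad_y dot_scaler dot_subl dot_scalel (dot_addr u e v) (dot_addr u e u) in tangent.
have u_0 := vnorm_ge0 u; have e_0 := vnorm_ge0 e; have v_0 := vnorm_ge0 v.
have := xs_min y; have := cauchy_schwarz v u; have := cauchy_schwarz v e.
have := cauchy_schwarz_lower u e; have := vnorm_sq u => uu ue ve vu gy.
have rho_pos : 0 < rho by apply: Rnot_ge_lt => rho_le; nra.
have := Rmult_le_compat_l rho _ _ (Rlt_le _ _ rho_pos) ue => rho_ue.
have ineq : rho * vnorm u * (vnorm u - vnorm e) <= vnorm v * (vnorm u + vnorm e)
  by rewrite -uu in tangent; lra.
have : vnorm u - vnorm e <= kappa * (vnorm u + vnorm e).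
  apply: (Rmult_le_reg_l (rho * vnorm u)) => //; nra.
nra.
Qed.

End ProximalPoints.

Section Weight.
Variables (om om' : R -> R) (gam : R).
Hypothesis om_ge0 : forall s, 0 <= s -> 0 <= om s.
Hypothesis om_mono : forall s t, 0 <= s -> s <= t -> om s <= om t.
Hypothesis om_deriv : forall s, 0 < s -> derivable_pt_lim om s (om' s).
Hypothesis om'_pos : forall s, 0 < s -> 0 < om' s.
Hypothesis om'_bd : forall s, 0 < s -> om' s <= gam * om s / s.

(* omega is strictly increasing from a nonnegative value, so it is positive
   on (0, oo). *)
Lemma weight_pos s : 0 < s -> 0 < om s.
Proof.
move=> s0.
have deriv : forall t, s / 2 <= t <= s -> derivable_pt_lim om t (om' t)
  by move=> t [t_lo _]; apply: om_deriv; lra.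
have [t [mvt t_in]] := MVT_cor2 om om' (s / 2) s ltac:(lra) deriv.
have slope := @om'_pos t ltac:(case: t_in; lra).
have : 0 < om' t * (s - s / 2) by apply: Rmult_lt_0_compat; lra.
have := @om_ge0 (s / 2) ltac:(lra); lra.
Qed.

(* The growth condition s om'(s) <= gam om(s) controls relative increments:
   om(r2) - om(r1) <= gam om(r2) (r2 - r1) / r1 (mean value theorem). *)
Lemma weight_increment r1 r2 : 0 < gam -> 0 < r1 -> r1 < r2 ->
  om r2 - om r1 <= gam * om r2 * (r2 - r1) / r1.
Proof.
move=> gam0 r1_0 r12.
have deriv : forall t, r1 <= t <= r2 -> derivable_pt_lim om t (om' t)
  by move=> t [t_lo _]; apply: om_deriv; lra.
have [t [mvt t_in]] := MVT_cor2 om om' r1 r2 r12 deriv.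
rewrite mvt.
have ratio : om t / t <= om r2 / r1.
  apply: (Rmult_le_reg_r (t * r1)); first nra.
  have -> : om t / t * (t * r1) = om t * r1 by field; lra.
  have -> : om r2 / r1 * (t * r1) = om r2 * t by field; lra.
  have := @om_mono t r2 ltac:(lra) ltac:(lra); have := @om_ge0 t ltac:(lra); nra.
have : om' t <= gam * (om r2 / r1).
  apply: Rle_trans (@om'_bd t ltac:(lra)) _; rewrite /Rdiv Rmult_assoc.
  by apply: Rmult_le_compat_l; lra.
have -> : gam * om r2 * (r2 - r1) / r1 = gam * (om r2 / r1) * (r2 - r1) by field; lra.
by move=> bd; apply: Rmult_le_compat_r; lra.
Qed.

End Weight.

(* The arithmetic core of the stability of proximal weights: with
   s = rho1 r1 and t = rho2 r2, the two-point inequality forces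
   (t - s) (r2 - r1) to be small, while 8 rho1 < 5 rho2 and the growth bound
   force r2 - r1 to be a fixed fraction of r2. *)
Lemma weight_jump_absurd rho1 rho2 r1 r2 V1 V2 E a gam :
  0 < rho1 -> 8 * rho1 < 5 * rho2 -> 0 < r1 -> r1 < r2 -> 1 <= gam ->
  rho2 - rho1 <= gam * rho2 * (r2 - r1) / r1 ->
  (rho1 * r1 - rho2 * r2) * (r1 - r2)
    <= (rho1 * r1 + rho2 * r2) * E + (V1 + V2) * (r1 + r2 + E) ->
  V1 <= a * rho1 * r1 -> V2 <= a * rho2 * r2 -> 0 <= a -> 64 * (a * gam) <= 1 ->
  0 <= E -> 80 * (gam * E) <= r2 -> False.
Proof.
move=> rho1_0 rho12 r1_0 r12 gam1 growth two_point V1_bd V2_bd a0 a_gam E0 E_r2.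
set q := r2 - r1; set s := rho1 * r1; set t := rho2 * r2.
have [q0 s0] : 0 < q /\ 0 < s by split; rewrite /q /s; nra.
have st : 8 * s < 5 * t by rewrite /s /t; nra.
have gap_r1 : 3 * r1 < 8 * (gam * q).
  have : (rho2 - rho1) * r1 <= gam * rho2 * q.
    have -> : gam * rho2 * q = gam * rho2 * (r2 - r1) / r1 * r1 by rewrite /q; field; lra.
    by apply: Rmult_le_compat_r; lra.
  move=> H; apply: (Rmult_lt_reg_l rho2); nra.
have gap_r2 : 3 * r2 < 11 * (gam * q) by rewrite /q in gap_r1 *; nra.
have small_q : 3 * q <= 13 * (E + a * (2 * r2 + E)).
  have V_bd : (V1 + V2) * (r1 + r2 + E) <= a * (s + t) * (2 * r2 + E).
    have sum_bd : V1 + V2 <= a * (s + t) by rewrite /s /t; lra.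
    have := Rmult_le_compat_r (r1 + r2 + E) _ _ ltac:(lra) sum_bd.
    have : a * (s + t) * (r1 + r2 + E) <= a * (s + t) * (2 * r2 + E).
      by apply: Rmult_le_compat_l; [apply: Rmult_le_pos|]; lra.
    lra.
  have : (t - s) * q <= (s + t) * (E + a * (2 * r2 + E)).
    have -> : (t - s) * q = (s - t) * (r1 - r2) by rewrite /q; ring.
    by rewrite /s /t in V_bd *; lra.
  set X := E + a * (2 * r2 + E) => H.
  have X0 : 0 <= X by rewrite /X; nra.
  have : (5 * t - 8 * s) * q >= 0 by nra.
  have : (5 * t - 8 * s) * X >= 0 by nra.
  move=> h1 h2; apply: (Rmult_le_reg_l t); lra.
have : gam * (3 * q) <= gam * (13 * (E + a * (2 * r2 + E))) by apply: Rmult_le_compat_l; lra.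
have : (a * gam) * (2 * r2 + E) <= 1 / 64 * (2 * r2 + E) by apply: Rmult_le_compat_r; lra.
nra.
Qed.

(* A parameter w is mapped to a query point
   [query w]; on the answer y a [verdict] says whether (w, y) is acceptable
   (Eq), or whether w should be increased (Lt) or decreased (Gt).  If the
   verdict cannot jump from Lt to Gt between parameters closer than Del, then
   a search on [wlo, whi] whose endpoints give Lt and Gt ends with Eq after
   about log2 ((whi - wlo) / Del) queries. *)
Section OracleBisection.
Variables (d : nat) (query : R -> vec d) (out : R -> R)
          (verdict : R -> vec d -> comparison).

(* Output on the branches that the analysis shows to be unreachable. *)
Definition fallback (w : R) : oalg d := ORet (query w) (out w).

Definition step (w : R) (y : vec d) (k_lt k_gt : oalg d) : oalg d :=
  match verdict w y with
  | Eq => ORet y (out w)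
  | Lt => k_lt
  | Gt => k_gt
  end.

Fixpoint bisect (N : nat) (lo hi : R) : oalg d :=
  match N with
  | O => fallback lo
  | S N' =>
      let m := (lo + hi) / 2 in
      OQuery (query m) (fun y => step m y (bisect N' m hi) (bisect N' lo m))
  end.

Definition search (N : nat) (lo hi : R) : oalg d :=
  OQuery (query lo) (fun y =>
    step lo y
      (OQuery (query hi) (fun y' => step hi y' (fallback hi) (bisect N lo hi)))
      (fallback lo)).

Variables (ok : vec d -> vec d -> Prop) (post : vec d -> R -> Prop)
          (wlo whi Del : R).
Hypothesis verdict_eq : forall w y, wlo <= w <= whi -> ok (query w) y ->
  verdict w y = Eq -> post y (out w).
Hypothesis no_jump : forall w1 w2 y1 y2,
  wlo <= w1 -> w1 < w2 -> w2 <= whi -> w2 - w1 <= Del ->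
  ok (query w1) y1 -> verdict w1 y1 = Lt ->
  ok (query w2) y2 -> verdict w2 y2 = Gt -> False.

Definition answered_with (c : comparison) (w : R) : Prop :=
  exists y, ok (query w) y /\ verdict w y = c.

Lemma bisect_safe N lo hi :
  wlo <= lo -> lo < hi -> hi <= whi -> hi - lo <= 2 ^ N * Del ->
  answered_with Lt lo -> answered_with Gt hi ->
  safe ok post N (bisect N lo hi).
Proof.
rewrite /answered_with; elim: N lo hi => [|N IH] lo hi lo_ge lohi hi_le width
  [y1 [ok1 v1]] [y2 [ok2 v2]] /=.
  by exfalso; apply: (no_jump lo_ge lohi hi_le _ ok1 v1 ok2 v2); lra.
rewrite /= in width; move=> y ok_y; rewrite /step.
case E: (verdict _ y).
- by apply: verdict_eq => //; lra.
- by apply: IH; try lra; [exists y | exists y2].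
- by apply: IH; try lra; [exists y1 | exists y].
Qed.

Hypothesis lo_not_gt : forall y, ok (query wlo) y -> verdict wlo y <> Gt.
Hypothesis hi_not_lt : forall y, ok (query whi) y -> verdict whi y <> Lt.

Lemma search_safe N : wlo < whi -> whi - wlo <= 2 ^ N * Del ->
  safe ok post N.+2 (search N wlo whi).
Proof.
move=> lohi width y ok_y; rewrite /step.
case E: (verdict wlo y).
- by apply: verdict_eq => //; lra.
- move=> y' ok_y'; case E': (verdict whi y').
  + by apply: verdict_eq => //; lra.
  + by have := hi_not_lt ok_y'.
  + apply: bisect_safe; rewrite ?E ?E' //; try lra.
    * by exists y.
    * by exists y'.
- by have := lo_not_gt ok_y.
Qed.

End OracleBisection.

(* Parametrizing the step size lam by w in (0, 1) through lam = A w^2 / (1 - w)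
   turns the accelerated coupling a = (lam + sqrt (lam^2 + 4 lam A)) / 2 into
   a = A w / (1 - w), so that the coupled point is the convex combination
   w x1 + (1 - w) x2. *)
Definition prox_lambda (A w : R) : R := A * w ^ 2 / (1 - w).

Definition convex_comb d (x1 x2 : vec d) (w : R) : vec d :=
  vadd (vscale w x1) (vscale (1 - w) x2).

Lemma prox_lambda_pos A w : 0 < A -> 0 < w < 1 -> 0 < prox_lambda A w.
Proof.
move=> A0 w01; apply: Rdiv_lt_0_compat; last lra.
by apply: Rmult_lt_0_compat; [lra | apply: pow_lt; lra].
Qed.

Definition coupling (A lam : R) : R := (lam + sqrt (lam ^ 2 + 4 * lam * A)) / 2.

Lemma coupling_weight A w : 0 < A -> 0 < w < 1 ->
  coupling A (prox_lambda A w) = A * w / (1 - w).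
Proof.
move=> A0 w01; rewrite /coupling /prox_lambda.
have -> : (A * w ^ 2 / (1 - w)) ^ 2 + 4 * (A * w ^ 2 / (1 - w)) * A
          = Rsqr (A * w * (2 - w) / (1 - w)) by rewrite /Rsqr; field; lra.
rewrite sqrt_Rsqr; first by field; lra.
apply: Rmult_le_pos; first by apply: Rmult_le_pos; [apply: Rmult_le_pos|]; lra.
by apply: Rlt_le; apply: Rinv_0_lt_compat; lra.
Qed.

Lemma coupled_point d (x1 x2 : vec d) A w : 0 < A -> 0 < w < 1 ->
  let a := coupling A (prox_lambda A w) in
  vadd (vscale (a / (A + a)) x1) (vscale (A / (A + a)) x2) = convex_comb x1 x2 w.
Proof.
move=> A0 w01 a; rewrite /a coupling_weight // /convex_comb.
have -> : A * w / (1 - w) / (A + A * w / (1 - w)) = w by field; split; nra.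
by have -> : A / (A + A * w / (1 - w)) = 1 - w by field; split; nra.
Qed.

Lemma prox_lambda_ratio A w1 w2 h :
  0 < A -> 10 * h <= w1 -> w1 < w2 -> 33 * h <= 1 - w2 -> w2 - w1 <= h ->
  prox_lambda A w2 <= 5 / 4 * prox_lambda A w1.
Proof.
move=> A0 w1_lo w12 w2_hi h_bd.
have w2_w1 : w2 <= 11 / 10 * w1 by lra.
have one_w : 33 * (1 - w1) <= 34 * (1 - w2) by lra.
have sq : w2 ^ 2 * (1 - w1) <= 5 / 4 * (w1 ^ 2 * (1 - w2)).
  have : w2 * w2 <= 121 / 100 * (w1 * w1) by nra.
  move=> sq_bd.
  have : w2 * w2 * (33 * (1 - w1)) <= 121 / 100 * (w1 * w1) * (34 * (1 - w2))
    by apply: Rmult_le_compat; nra.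
  rewrite /=; nra.
rewrite /prox_lambda; apply: (Rmult_le_reg_r ((1 - w1) * (1 - w2))); first nra.
have -> : A * w2 ^ 2 / (1 - w2) * ((1 - w1) * (1 - w2)) = A * (w2 ^ 2 * (1 - w1))
  by field; lra.
have -> : 5 / 4 * (A * w1 ^ 2 / (1 - w1)) * ((1 - w1) * (1 - w2))
          = A * (5 / 4 * (w1 ^ 2 * (1 - w2))) by field; lra.
by apply: Rmult_le_compat_l; lra.
Qed.

Section ConvexCombination.
Variables (d : nat) (x1 x2 xs : vec d) (D : R).

Lemma convex_comb_near w : 0 <= w <= 1 ->
  vnorm (vsub x1 xs) <= D -> vnorm (vsub x2 xs) <= D ->
  vnorm (vsub (convex_comb x1 x2 w) xs) <= D.
Proof.
move=> w01 near1 near2.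
have -> : vsub (convex_comb x1 x2 w) xs
          = vadd (vscale w (vsub x1 xs)) (vscale (1 - w) (vsub x2 xs))
  by apply: vec_ext => i; rewrite /convex_comb /vsub /vadd /vscale; ring.
apply: Rle_trans (vnorm_triangle _ _) _.
rewrite !vnorm_scale !Rabs_right; nra.
Qed.

Lemma convex_comb_dist w1 w2 :
  vnorm (vsub (convex_comb x1 x2 w1) (convex_comb x1 x2 w2))
  = Rabs (w1 - w2) * vnorm (vsub x1 x2).
Proof.
have -> : vsub (convex_comb x1 x2 w1) (convex_comb x1 x2 w2) = vscale (w1 - w2) (vsub x1 x2)
  by apply: vec_ext => i; rewrite /convex_comb /vsub /vadd /vscale; ring.
exact: vnorm_scale.
Qed.

End ConvexCombination.

(* Two approximate proximal points whose residuals are a small fraction of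
   their proximal steps cannot have weights om(r) differing by a factor 8/5
   when the query points are close: combine the two-point inequality with the
   growth bound on omega. *)
Section ProximalWeights.
Variables (d : nat) (g : vec d -> R) (grad : vec d -> vec d).
Variables (om om' : R -> R) (gam : R).
Hypothesis g_convex : convex_fun g.
Hypothesis g_grad : forall z, has_gradient g z (grad z).
Hypothesis om_ge0 : forall s, 0 <= s -> 0 <= om s.
Hypothesis om_mono : forall s t, 0 <= s -> s <= t -> om s <= om t.
Hypothesis om_deriv : forall s, 0 < s -> derivable_pt_lim om s (om' s).
Hypothesis om'_bd : forall s, 0 < s -> om' s <= gam * om s / s.
Hypothesis gam_ge1 : 1 <= gam.

Lemma prox_weights_stable (y1 y2 p1 p2 : vec d) (a : R) :
  let r1 := vnorm (vsub y1 p1) in let r2 := vnorm (vsub y2 p2) in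
  0 <= a -> 64 * (a * gam) <= 1 -> 0 < om r1 * r1 ->
  vnorm (prox_residual grad (om r1) p1 y1) <= a * om r1 * r1 ->
  vnorm (prox_residual grad (om r2) p2 y2) <= a * om r2 * r2 ->
  80 * (gam * vnorm (vsub p1 p2)) <= r2 ->
  5 * om r2 <= 8 * om r1.
Proof.
move=> r1 r2 a0 a_gam step1 res1 res2 close; apply: Rnot_lt_le => jump.
have [r1_0 r2_0] : 0 <= r1 /\ 0 <= r2 by split; apply: vnorm_ge0.
have om1_0 := om_ge0 r1_0.
have r1_pos : 0 < r1 by apply: Rnot_ge_lt => r1_le; nra.
have om1_pos : 0 < om r1 by apply: Rnot_ge_lt => om1_le; nra.
have r12 : r1 < r2.
  by apply: Rnot_ge_lt => r21; have := om_mono r2_0 (Rge_le _ _ r21); lra.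
apply: (weight_jump_absurd om1_pos _ r1_pos r12 gam_ge1 _ _ res1 res2 a0 a_gam
          (vnorm_ge0 _) close); first lra.
- by apply: (weight_increment om_ge0 om_mono om_deriv om'_bd); lra.
- exact: (prox_two_point g_convex g_grad y1 y2 p1 p2 om1_0 (om_ge0 r2_0)).
Qed.

End ProximalWeights.

Section ProximalSearch.
Variables (d : nat) (om : R -> R) (alpha c delta D A : R) (x1 x2 : vec d).

Definition prox_query (w : R) : vec d := convex_comb x1 x2 w.

Definition prox_verdict (w : R) (y : vec d) : comparison :=
  let r := vnorm (vsub y (prox_query w)) in
  let phi := prox_lambda A w * om r in
  if Rle_dec (om r * r) (c * delta) then Eq
  else if Rlt_dec phi (1 / 2) then Lt
  else if Rlt_dec 1 phi then Gt
  else Eq.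

Lemma prox_verdict_spec w y :
  let r := vnorm (vsub y (prox_query w)) in
  let phi := prox_lambda A w * om r in
  match prox_verdict w y with
  | Eq => om r * r <= c * delta \/ (c * delta < om r * r /\ 1 / 2 <= phi <= 1)
  | Lt => c * delta < om r * r /\ phi < 1 / 2
  | Gt => c * delta < om r * r /\ 1 < phi
  end.
Proof.
rewrite /prox_verdict /=.
case: Rle_dec => [small|big]; first by left.
case: Rlt_dec => [lt|nlt]; first by split; lra.
by case: Rlt_dec => [gt|ngt]; [split | right; split]; lra.
Qed.

(* The bisection schedule.  M bounds om on the region where proximal steps
   can land; w stays in [sched_lo, sched_hi] and is resolved to 1/resolution. *)
Let M := om (2 * D).
Let Q := 8 * D * M / (c * delta).

Definition sched_lo : R := 1 / (4 * A * M).
Definition sched_hi : R := 1 - 1 / (4 + Q).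
Definition resolution : R := 5 / 2 * (D * M / delta) + 40 * (A * M) + 33 * (4 + Q).

Definition prox_algorithm (N : nat) : oalg d :=
  search prox_query (prox_lambda A) prox_verdict N sched_lo sched_hi.

Hypothesis D_pos : 0 < D.
Hypothesis M_pos : 0 < M.
Hypothesis A_lo : 1 <= 2 * A * M.
Hypothesis delta_pos : 0 < delta.
Hypothesis c_pos : 0 < c.

Lemma resolution_pos : 0 < resolution.
Proof.
have Q0 : 0 < Q by apply: Rdiv_lt_0_compat; nra.
have DMd : 0 < D * M / delta by apply: Rdiv_lt_0_compat; nra.
by rewrite /resolution; nra.
Qed.

Lemma sched_bounds :
  [/\ 0 < sched_lo, sched_lo < sched_hi, sched_hi < 1,
      10 * (1 / resolution) <= sched_lo & 33 * (1 / resolution) <= 1 - sched_hi].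
Proof.
have Q0 : 0 < Q by apply: Rdiv_lt_0_compat; nra.
have AM0 : 0 < A * M by lra.
have A0 : 0 < A by nra.
have DMd : 0 < D * M / delta by apply: Rdiv_lt_0_compat; nra.
have X0 := resolution_pos.
rewrite /sched_lo /sched_hi; split.
- by apply: Rdiv_lt_0_compat; lra.
- have : 1 / (4 * A * M) <= 1 / 2.
    by rewrite /Rdiv !Rmult_1_l; apply: Rinv_le_contravar; lra.
  have : 1 / (4 + Q) <= 1 / 4.
    by rewrite /Rdiv !Rmult_1_l; apply: Rinv_le_contravar; lra.
  lra.
- have : 0 < 1 / (4 + Q) by apply: Rdiv_lt_0_compat; lra.
  lra.
- apply: (Rmult_le_reg_r (resolution * (4 * A * M))); first nra.
  have -> : 10 * (1 / resolution) * (resolution * (4 * A * M)) = 40 * (A * M)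
    by field; lra.
  have -> : 1 / (4 * A * M) * (resolution * (4 * A * M)) = resolution by field; repeat split; lra.
  by rewrite /resolution; lra.
- apply: (Rmult_le_reg_r (resolution * (4 + Q))); first nra.
  have -> : 33 * (1 / resolution) * (resolution * (4 + Q)) = 33 * (4 + Q) by field; lra.
  have -> : (1 - (1 - 1 / (4 + Q))) * (resolution * (4 + Q)) = resolution
    by field; repeat split; lra.
  by rewrite /resolution; lra.
Qed.

(* At the lower endpoint lam om(2 D) <= 1, so lam om(r) <= 1 for every step
   r <= 2 D. *)
Lemma sched_lo_weight : prox_lambda A sched_lo * M <= 1.
Proof.
have A0 : 0 < A by nra.
rewrite /prox_lambda /sched_lo.
have -> : A * (1 / (4 * A * M)) ^ 2 / (1 - 1 / (4 * A * M)) * M = / (4 * (4 * A * M - 1))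
  by field; repeat split; nra.
rewrite -Rinv_1; apply: Rinv_le_contravar; lra.
Qed.

(* At the upper endpoint lam c delta >= D, so lam om(r) > 1/2 for every step
   r <= 2 D with om(r) r > c delta. *)
Lemma sched_hi_weight : D <= prox_lambda A sched_hi * (c * delta).
Proof.
have [_ _ hi_lt1 _ _] := sched_bounds.
have Q0 : 0 < Q by apply: Rdiv_lt_0_compat; nra.
have hi_ge : 3 / 4 <= sched_hi.
  rewrite /sched_hi; have : 1 / (4 + Q) <= 1 / 4.
    by rewrite /Rdiv !Rmult_1_l; apply: Rinv_le_contravar; lra.
  lra.
have -> : prox_lambda A sched_hi = A * sched_hi ^ 2 * (4 + Q)
  by rewrite /prox_lambda /sched_hi; field; lra.
have AQ : A * Q * (c * delta) = 8 * D * (A * M) by rewrite /Q; field; lra.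
have sq : 9 / 16 <= sched_hi ^ 2 by rewrite /=; nra.
have : 9 / 16 * Q <= sched_hi ^ 2 * (4 + Q).
  by apply: Rmult_le_compat; lra.
have A0 : 0 < A by nra.
move=> bd; have := Rmult_le_compat_r (A * (c * delta)) _ _ ltac:(nra) bd; nra.
Qed.

(* Parameters closer than 1/resolution give query points so close that
   80 gam |q1 - q2| M <= c delta. *)
Lemma sched_resolution gam : 0 <= gam -> 64 * gam <= c ->
  80 * gam * (2 * D * (1 / resolution)) * M <= c * delta.
Proof.
move=> gam0 gam_c.
have DMd : 0 < D * M / delta by apply: Rdiv_lt_0_compat; nra.
have Q0 : 0 < Q by apply: Rdiv_lt_0_compat; nra.
have X_ge : 5 / 2 * (D * M / delta) <= resolution by rewrite /resolution; nra.
have : D * M * (1 / resolution) <= 2 / 5 * delta.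
  apply: (Rmult_le_reg_r resolution); first lra.
  have -> : D * M * (1 / resolution) * resolution = D * M by field; lra.
  have := Rmult_le_compat_l (2 / 5 * delta) _ _ ltac:(lra) X_ge.
  have -> : 2 / 5 * delta * (5 / 2 * (D * M / delta)) = D * M by field; lra.
  lra.
move=> bd; have := Rmult_le_compat_l (160 * gam) _ _ ltac:(lra) bd; nra.
Qed.

Lemma resolution_le Rad eps : (forall s t, 0 <= s -> s <= t -> om s <= om t) ->
  64 <= c -> delta <= 8 * D * om (8 * D) -> A <= Rad ^ 2 / eps ->
  let Y := (160 * D * c / delta + 9 * Rad ^ 2 / eps) * om (8 * c * D) in
  resolution <= 8 * Y /\ 1 <= Y.
Proof.
move=> om_mono c64 delta_reach A_B Y.
set B := Rad ^ 2 / eps in A_B.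
set Om := om (8 * c * D).
have M_Om : M <= Om by rewrite /M /Om; apply: om_mono; nra.
have delta_Om : delta <= 8 * D * Om.
  have : om (8 * D) <= Om by rewrite /Om; apply: om_mono; nra.
  nra.
have A0 : 0 < A by nra.
have BOm : A * M <= B * Om by apply: Rmult_le_compat; lra.
set T := D * Om / delta.
have T_ge : 1 / 8 <= T.
  apply: (Rmult_le_reg_r (8 * delta)); first lra.
  have -> : T * (8 * delta) = 8 * D * Om by rewrite /T; field; lra.
  lra.
have DM_T : D * M / delta <= T.
  rewrite /T /Rdiv; apply: Rmult_le_compat_r.
    by apply: Rlt_le; apply: Rinv_0_lt_compat.
  by apply: Rmult_le_compat_l; lra.
have Q_T : Q <= T.
  have -> : Q = 8 / c * (D * M / delta) by rewrite /Q; field; lra.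
  have : 8 / c <= 1 by apply: (Rmult_le_reg_r c); [lra | rewrite /Rdiv Rmult_assoc Rinv_l; lra].
  have : 0 <= D * M / delta by apply: Rlt_le; apply: Rdiv_lt_0_compat; nra.
  nra.
have -> : Y = 160 * c * T + 9 * (B * Om) by rewrite /Y /T /Om /B /Rdiv; ring.
have : 64 * T <= c * T by apply: Rmult_le_compat_r; lra.
rewrite /resolution; split; nra.
Qed.

Section Correctness.
Variables (g : vec d -> R) (grad : vec d -> vec d) (xs : vec d).
Variables (om' : R -> R) (gam eps : R).
Hypothesis g_convex : convex_fun g.
Hypothesis g_grad : forall z, has_gradient g z (grad z).
Hypothesis xs_min : forall z, g xs <= g z.
Hypothesis x1_near : vnorm (vsub x1 xs) <= D.
Hypothesis x2_near : vnorm (vsub x2 xs) <= D.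
Hypothesis om_ge0 : forall s, 0 <= s -> 0 <= om s.
Hypothesis om_mono : forall s t, 0 <= s -> s <= t -> om s <= om t.
Hypothesis om_deriv : forall s, 0 < s -> derivable_pt_lim om s (om' s).
Hypothesis om'_bd : forall s, 0 < s -> om' s <= gam * om s / s.
Hypothesis gam_ge1 : 1 <= gam.
Hypothesis alpha_ge0 : 0 <= alpha.
Hypothesis c_ge1 : 1 <= c.
Hypothesis resid_small : 64 * ((alpha + 1 / c) * gam) <= 1.
Hypothesis delta_reach : delta <= 8 * D * om (8 * D).
Hypothesis delta_opt : ((1 + alpha) * c + 1) * delta * (9 * c * D) <= eps.

Let ok := prox_oracle_ok grad om alpha delta.

Definition prox_outcome (y : vec d) (lam : R) : Prop :=
  0 < lam /\
  let a := coupling A lam in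
  let xt := vadd (vscale (a / (A + a)) x1) (vscale (A / (A + a)) x2) in
  let r := vnorm (vsub y xt) in
  (g y <= g xs + eps /\ om r * r <= c * delta) \/
  (1 / 2 <= lam * om r <= 1 /\ om r * r > c * delta /\
   vnorm (vadd (grad y) (vscale (om r) (vsub y xt))) <= alpha * om r * r + delta).

Lemma prox_query_near w : 0 <= w <= 1 -> vnorm (vsub (prox_query w) xs) <= D.
Proof. by move=> w01; apply: convex_comb_near. Qed.

Lemma far_answer w y : 0 <= w <= 1 -> ok (prox_query w) y ->
  let r := vnorm (vsub y (prox_query w)) in c * delta < om r * r ->
  vnorm (prox_residual grad (om r) (prox_query w) y) <= (alpha + 1 / c) * om r * r
  /\ r <= 2 * D.
Proof.
move=> w01 ok_y r big.
have c_inv : 0 < 1 / c by apply: Rdiv_lt_0_compat; lra.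
have resid : vnorm (prox_residual grad (om r) (prox_query w) y)
             <= (alpha + 1 / c) * om r * r.
  have : delta <= om r * r / c.
    apply: (Rmult_le_reg_l c); first lra.
    have -> : c * (om r * r / c) = om r * r by field; lra.
    lra.
  move: ok_y; rewrite /ok /prox_oracle_ok -/r => ok_y bd.
  apply: Rle_trans ok_y _.
  have -> : (alpha + 1 / c) * om r * r = alpha * om r * r + om r * r / c by field; lra.
  lra.
split=> //; apply: Rle_trans (Rmult_le_compat_l 2 _ _ ltac:(lra) (prox_query_near w01)).
apply: (prox_point_localized g_convex g_grad xs_min (rho := om r) (kappa := alpha + 1 / c)) => //.
- have : (alpha + 1 / c) * 1 <= (alpha + 1 / c) * gam by apply: Rmult_le_compat_l; lra.
  split; lra.
- have : 0 < c * delta by nra.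
  rewrite -/r; lra.
Qed.

(* An answer with a negligible proximal step is eps-optimal: the gradient at
   y is O(delta) and y stays within 9 c D of the minimizer. *)
Lemma small_step_optimal w y : 0 <= w <= 1 -> ok (prox_query w) y ->
  let r := vnorm (vsub y (prox_query w)) in om r * r <= c * delta ->
  g y <= g xs + eps.
Proof.
move=> w01 ok_y r small.
have near := prox_query_near w01.
have r0 : 0 <= r := vnorm_ge0 _.
have om_r0 := om_ge0 r0.
have r_le : r <= 8 * c * D.
  apply: Rnot_lt_le => r_gt.
  have om8 : 0 < om (8 * D).
    apply: Rnot_ge_lt => om8_le; have : 8 * D * om (8 * D) <= 0 by nra.
    lra.
  have : om (8 * D) <= om r by apply: om_mono; nra.
  nra.
have grad_bd : vnorm (grad y) <= ((1 + alpha) * c + 1) * delta.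
  have -> : grad y = vsub (prox_residual grad (om r) (prox_query w) y)
                          (vscale (om r) (vsub y (prox_query w)))
    by apply: vec_ext => i; rewrite /prox_residual /vsub /vadd /vscale; ring.
  apply: Rle_trans (vnorm_sub_le _ _) _.
  rewrite vnorm_scale Rabs_right -/r; last lra.
  have : alpha * om r * r <= alpha * (c * delta) by rewrite Rmult_assoc; apply: Rmult_le_compat_l.
  move: ok_y; rewrite /ok /prox_oracle_ok /prox_residual -/r => ok_y; lra.
have dist : vnorm (vsub xs y) <= 9 * c * D.
  rewrite vnorm_sub_sym.
  have -> : vsub y xs = vadd (vsub y (prox_query w)) (vsub (prox_query w) xs)
    by apply: vec_ext => i; rewrite /vsub /vadd; ring.
  apply: Rle_trans (vnorm_triangle _ _) _; rewrite -/r; nra.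
have := convex_tangent_le g_convex xs (g_grad y).
have := cauchy_schwarz_lower (grad y) (vsub xs y).
have := Rmult_le_compat _ _ _ _ (vnorm_ge0 _) (vnorm_ge0 _) grad_bd dist.
lra.
Qed.

Lemma A_pos : 0 < A.
Proof. nra. Qed.

Lemma accepted_outcome w y : 0 < w < 1 -> ok (prox_query w) y ->
  prox_verdict w y = Eq -> prox_outcome y (prox_lambda A w).
Proof.
move=> w01 ok_y accept; split; first exact: prox_lambda_pos A_pos w01.
cbv zeta; rewrite (coupled_point x1 x2 A_pos w01) -/(prox_query w).
have := prox_verdict_spec w y; rewrite accept /= => [[small | [big window]]].
- by left; split=> //; apply: (small_step_optimal (w := w)) => //; lra.
- by right; split.
Qed.

Lemma gam_le_c : 64 * gam <= c.
Proof.
have c_inv : 0 < 1 / c by apply: Rdiv_lt_0_compat; lra.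
have : 64 * (1 / c * gam) <= 1.
  apply: Rle_trans resid_small; apply: Rmult_le_compat_l; first lra.
  by apply: Rmult_le_compat_r; lra.
have -> : 64 * (1 / c * gam) = 64 * gam / c by field; lra.
move=> bd; apply: (Rmult_le_reg_r (/ c)); first by apply: Rinv_0_lt_compat; lra.
by rewrite Rinv_r; lra.
Qed.

(* Between two parameters closer than 1/resolution the verdict cannot jump
   from "lam om(r) < 1/2" to "lam om(r) > 1": lam changes by a factor at most
   5/4, so the weights om(r) would have to jump by more than 8/5. *)
Lemma verdict_no_jump w1 w2 y1 y2 :
  sched_lo <= w1 -> w1 < w2 -> w2 <= sched_hi -> w2 - w1 <= 1 / resolution ->
  ok (prox_query w1) y1 -> prox_verdict w1 y1 = Lt ->
  ok (prox_query w2) y2 -> prox_verdict w2 y2 = Gt -> False.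
Proof.
move=> lo_w1 w12 w2_hi close ok1 v1 ok2 v2.
have [lo_pos lo_hi hi_lt1 res_lo res_hi] := sched_bounds.
have := prox_verdict_spec w1 y1; have := prox_verdict_spec w2 y2.
rewrite v1 v2 /=; set r1 := vnorm (vsub y1 _); set r2 := vnorm (vsub y2 _).
move=> [big2 high2] [big1 low1].
have [res1 _] := far_answer (w := w1) ltac:(lra) ok1 big1.
have [res2 r2_le] := far_answer (w := w2) ltac:(lra) ok2 big2.
have ratio : prox_lambda A w2 <= 5 / 4 * prox_lambda A w1
  by apply: (prox_lambda_ratio (h := 1 / resolution)) A_pos _ w12 _ close; lra.
have lam1 := prox_lambda_pos A_pos (w := w1) ltac:(lra).
have om2_0 : 0 <= om r2 by apply: om_ge0; apply: vnorm_ge0.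
have jump : 8 * om r1 < 5 * om r2.
  apply: (Rmult_lt_reg_r (prox_lambda A w1)) => //.
  have := Rmult_le_compat_r (om r2) _ _ om2_0 ratio; lra.
have E_bd : vnorm (vsub (prox_query w1) (prox_query w2)) <= 2 * D * (1 / resolution).
  rewrite /prox_query convex_comb_dist Rabs_left; last lra.
  have : vnorm (vsub x1 x2) <= 2 * D.
    have -> : vsub x1 x2 = vsub (vsub x1 xs) (vsub x2 xs)
      by apply: vec_ext => i; rewrite /vsub; ring.
    by apply: Rle_trans (vnorm_sub_le _ _) _; lra.
  by move=> x12; rewrite Rmult_comm; apply: Rmult_le_compat; try lra; apply: vnorm_ge0.
have om2_M : om r2 <= M by apply: om_mono; first exact: vnorm_ge0.
have close_pts : 80 * (gam * vnorm (vsub (prox_query w1) (prox_query w2))) <= r2.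
  have := sched_resolution (gam := gam) ltac:(lra) gam_le_c.
  have := Rmult_le_compat_l (80 * gam) _ _ ltac:(lra) E_bd.
  have : om r2 * r2 <= M * r2 by apply: Rmult_le_compat_r; first exact: vnorm_ge0.
  move=> h1 h2 h3; apply: (Rmult_le_reg_r M) => //; nra.
have c_inv : 0 < 1 / c by apply: Rdiv_lt_0_compat; lra.
have step1 : 0 < om r1 * r1.
  have : 0 < c * delta by nra.
  lra.
have := prox_weights_stable g_convex g_grad om_ge0 om_mono om_deriv om'_bd gam_ge1
  (a := alpha + 1 / c) ltac:(lra) resid_small step1 res1 res2 close_pts.
rewrite -/r1 -/r2; lra.
Qed.

Lemma sched_lo_not_gt y : ok (prox_query sched_lo) y -> prox_verdict sched_lo y <> Gt.
Proof.
move=> ok_y v_gt; have := prox_verdict_spec sched_lo y; rewrite v_gt /=.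
have [lo_pos lo_hi hi_lt1 _ _] := sched_bounds.
move=> [big high]; have [_ r_le] := far_answer (w := sched_lo) ltac:(lra) ok_y big.
have : om (vnorm (vsub y (prox_query sched_lo))) <= M by apply: om_mono; first exact: vnorm_ge0.
have lam := prox_lambda_pos A_pos (w := sched_lo) ltac:(lra).
have := sched_lo_weight; nra.
Qed.

Lemma sched_hi_not_lt y : ok (prox_query sched_hi) y -> prox_verdict sched_hi y <> Lt.
Proof.
move=> ok_y v_lt; have := prox_verdict_spec sched_hi y; rewrite v_lt /=.
have [lo_pos lo_hi hi_lt1 _ _] := sched_bounds.
move=> [big low]; have [_ r_le] := far_answer (w := sched_hi) ltac:(lra) ok_y big.
move: big low r_le; set r := vnorm _ => big low r_le.
have lam := prox_lambda_pos A_pos (w := sched_hi) ltac:(lra).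
have om_r0 : 0 <= om r by apply: om_ge0; exact: vnorm_ge0.
have := Rmult_lt_compat_l _ _ _ lam big.
have : prox_lambda A sched_hi * om r * r <= prox_lambda A sched_hi * om r * (2 * D)
  by apply: Rmult_le_compat_l; nra.
have := sched_hi_weight; nra.
Qed.

Theorem prox_algorithm_correct N : resolution <= 2 ^ N ->
  safe ok prox_outcome N.+2 (prox_algorithm N).
Proof.
move=> X_le; have [lo_pos lo_hi hi_lt1 res_lo _] := sched_bounds.
apply: (search_safe (Del := 1 / resolution)) => //.
- by move=> w y w_in; apply: accepted_outcome; lra.
- exact: verdict_no_jump.
- exact: sched_lo_not_gt.
- exact: sched_hi_not_lt.
- have X0 := resolution_pos.
  have : 1 <= 2 ^ N * (1 / resolution).
    apply: (Rmult_le_reg_r resolution) => //.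
    have -> : 2 ^ N * (1 / resolution) * resolution = 2 ^ N by field; lra.
    lra.
  lra.
Qed.

End Correctness.

End ProximalSearch.

Lemma ln2_pos : 0 < ln 2.
Proof. by rewrite -ln_1; apply: ln_increasing; lra. Qed.

Lemma log2_le x y : 0 < x -> x <= y -> log2 x <= log2 y.
Proof.
move=> x0 xy; rewrite /log2; apply: Rmult_le_compat_r.
  by apply: Rlt_le; apply: Rinv_0_lt_compat; exact: ln2_pos.
case: (Rle_lt_or_eq_dec _ _ xy) => [lt | ->]; last exact: Rle_refl.
by apply: Rlt_le; apply: ln_increasing.
Qed.

Lemma log2_mul8 y : 0 < y -> log2 (8 * y) = 3 + log2 y.
Proof.
move=> y0; have := ln2_pos => l2.
have -> : 8 = 2 ^ 3 by rewrite /=; lra.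
by rewrite /log2 ln_mult ?ln_pow; try apply: pow_lt; try lra; rewrite /=; field; lra.
Qed.

Lemma pow2_cover X : 1 < X -> exists N : nat, X <= 2 ^ N /\ INR N <= log2 X + 1.
Proof.
move=> X1; have l2 := ln2_pos.
have lnX : 0 < ln X by rewrite -ln_1; apply: ln_increasing; lra.
set z := log2 X.
have lnX_eq : ln X = z * ln 2 by rewrite /z /log2; field; lra.
have [up_gt up_le] := archimed z.
have z0 : 0 < z by apply: Rdiv_lt_0_compat.
have up0 : (0 <= up z)%Z by apply: le_IZR; lra.
exists (Z.to_nat (up z)).
have N_eq : INR (Z.to_nat (up z)) = IZR (up z) by rewrite INR_IZR_INZ Z2Nat.id.
split; last by rewrite N_eq; lra.
apply: Rnot_lt_le => big.
have pos : 0 < 2 ^ Z.to_nat (up z) by apply: pow_lt; lra.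
have := ln_increasing _ _ pos big.
rewrite ln_pow ?N_eq; last lra.
nra.
Qed.

Lemma oracle_calls_bound X Y : 0 < X -> X <= 8 * Y -> 1 <= Y ->
  exists N : nat, X <= 2 ^ N /\ INR N.+2 <= 6 + log2 Y.
Proof.
move=> X0 XY Y1.
have logY : 0 <= log2 Y by have := @log2_le 1 Y ltac:(lra) Y1; rewrite /log2 ln_1; lra.
case: (Rle_lt_dec X 1) => [X_le1 | X_gt1].
  by exists 0%nat; rewrite /=; split; lra.
have [N [XN countN]] := pow2_cover X_gt1.
exists N; split => //.
have := log2_le X0 XY; rewrite log2_mul8; last lra.
by rewrite !S_INR; lra.
Qed.

Lemma parameter_bounds alpha c gam : 0 <= alpha -> 1 <= c -> 1 <= gam ->
  64 * (alpha + 1 / c) * gam ^ 2 <= 1 ->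
  64 * ((alpha + 1 / c) * gam) <= 1 /\ 64 <= c.
Proof.
move=> alpha0 c1 gam1 small; have c_inv : 0 < 1 / c by apply: Rdiv_lt_0_compat; lra.
have small' : 64 * ((alpha + 1 / c) * gam) <= 1 by move: small; rewrite /=; nra.
split=> //; have : 64 * (1 / c) <= 1 by nra.
move=> h; apply: (Rmult_le_reg_r (1 / c)) => //.
have -> : c * (1 / c) = 1 by field; lra.
lra.
Qed.

Lemma tolerance_bounds (om : R -> R) alpha c delta eps D :
  0 < D -> 1 <= c -> 0 <= alpha ->
  delta <= Rmin (eps / (9 * D * c * ((1 + alpha) * c + 1))) (8 * D * om (8 * D)) ->
  delta <= 8 * D * om (8 * D) /\ ((1 + alpha) * c + 1) * delta * (9 * c * D) <= eps.
Proof.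
move=> D0 c1 alpha0 tol; split; first exact: Rle_trans tol (Rmin_r _ _).
have K0 : 0 < 9 * D * c * ((1 + alpha) * c + 1) by apply: Rmult_lt_0_compat; nra.
have := Rmult_le_compat_r _ _ _ (Rlt_le _ _ K0) (Rle_trans _ _ _ tol (Rmin_l _ _)).
have -> : eps / (9 * D * c * ((1 + alpha) * c + 1)) * (9 * D * c * ((1 + alpha) * c + 1))
          = eps by field; repeat split; nra.
lra.
Qed.

Theorem mainTheorem16
  (d : nat) (Rad eps : R) (om om' : R -> R) (gam alpha c delta : R)
  (hR : 0 < Rad) (heps : 0 < eps)
  (* omega : R_+ -> R_+, non-decreasing, continuous on [0,oo),
     continuously differentiable on (0,oo) with 0 < om' s <= gam om s / s *)
  (hom_nonneg : forall s, 0 <= s -> 0 <= om s)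
  (hom_mono : forall s t, 0 <= s -> s <= t -> om s <= om t)
  (hom_cont : forall s, 0 <= s -> forall e, 0 < e -> exists del, 0 < del /\
      forall t, 0 <= t -> Rabs (t - s) < del -> Rabs (om t - om s) < e)
  (hom_deriv : forall s, 0 < s -> derivable_pt_lim om s (om' s))
  (hom'_cont : forall s, 0 < s -> continuity_pt om' s)
  (hgam : 1 <= gam)
  (hom'_bd : forall s, 0 < s -> 0 < om' s /\ om' s <= gam * om s / s)
  (halpha : 0 <= alpha < 1)
  (hc : 1 <= c)
  (hcgam : 64 * (alpha + 1 / c) * gam ^ 2 <= 1)
  (hdelta0 : 0 < delta)
  (hdelta : delta <= Rmin
      (eps / (9 * (8 / sqrt (1 - alpha)) * Rad * c * ((1 + alpha) * c + 1)))
      (8 * (8 / sqrt (1 - alpha)) * Rad * om (8 * (8 / sqrt (1 - alpha)) * Rad)))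
  (x1 x2 : vec d) (A : R)
  (hA : 1 / (2 * om (2 * (8 / sqrt (1 - alpha)) * Rad)) <= A <= Rad ^ 2 / eps) :
  let mu := 8 / sqrt (1 - alpha) in
  exists (alg : oalg d) (n : nat),
    INR n <= 6 + log2 ((160 * mu * Rad * c / delta + 9 * Rad ^ 2 / eps)
                       * om (8 * c * mu * Rad)) /\
    forall (g : vec d -> R) (grad : vec d -> vec d) (xstar : vec d),
      convex_fun g ->
      twice_diff_with_grad g grad ->
      (forall x, g xstar <= g x) ->
      vnorm xstar <= Rad ->
      vnorm (vsub x1 xstar) <= mu * Rad ->
      vnorm (vsub x2 xstar) <= mu * Rad ->
      safe (prox_oracle_ok grad om alpha delta)
        (fun y lam =>
           0 < lam /\
           let a := (lam + sqrt (lam ^ 2 + 4 * lam * A)) / 2 in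
           let xt := vadd (vscale (a / (A + a)) x1) (vscale (A / (A + a)) x2) in
           let r := vnorm (vsub y xt) in
           (g y <= g xstar + eps /\ om r * r <= c * delta) \/
           (1 / 2 <= lam * om r <= 1 /\ om r * r > c * delta /\
            vnorm (vadd (grad y) (vscale (om r) (vsub y xt)))
              <= alpha * om r * r + delta))
        n alg.
Proof.
move=> mu; rewrite -/mu in hdelta hA.
have mu_pos : 0 < mu by apply: Rdiv_lt_0_compat; [lra | apply: sqrt_lt_R0; lra].
set D := mu * Rad; rewrite !(Rmult_assoc _ mu Rad) -/D in hdelta hA *.
have D_pos : 0 < D by apply: Rmult_lt_0_compat.
have c_pos : 0 < c by lra.
have om'_pos s : 0 < s -> 0 < om' s by case/hom'_bd.
have om'_le s : 0 < s -> om' s <= gam * om s / s by case/hom'_bd.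
have M_pos := weight_pos hom_nonneg hom_deriv om'_pos (s := 2 * D) ltac:(lra).
have [resid_small c64] := parameter_bounds (proj1 halpha) hc hgam hcgam.
have [delta_reach delta_opt] := tolerance_bounds D_pos hc (proj1 halpha) hdelta.
have A_lo : 1 <= 2 * A * om (2 * D).
  have := Rmult_le_compat_r (2 * om (2 * D)) _ _ ltac:(lra) (proj1 hA).
  by rewrite /Rdiv Rmult_1_l Rinv_l; lra.
have [X_le Y_ge1] := resolution_le D_pos M_pos A_lo hdelta0 c_pos hom_mono c64
  delta_reach (proj2 hA).
have X_pos := resolution_pos D_pos M_pos A_lo hdelta0 c_pos.
have [N [XN calls]] := oracle_calls_bound X_pos X_le Y_ge1.
exists (prox_algorithm om c delta D A x1 x2 N), N.+2; split => //.
move=> g grad xs g_convex [g_grad _] xs_min _ near1 near2.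
exact: (prox_algorithm_correct D_pos M_pos A_lo hdelta0 c_pos g_convex g_grad xs_min near1 near2
  hom_nonneg hom_mono hom_deriv om'_le hgam (proj1 halpha) hc resid_small delta_reach delta_opt XN).
Qed.
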